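(* Let $I$ be a nonempty directed set and let $\{\Delta_i\}_{i\in I}$ be a family of theories in a signature $\sigma$ such that each $\Delta_i$ is consistent and complete. Then $\liminf_I \Delta_i$ is consistent and $\limsup_I \Delta_i$ is complete. Moreover, the following are equivalent: (1) $\limsup_I \Delta_i$ is consistent; (2) $\liminf_I \Delta_i$ is complete; (3) $\lim_I \Delta_i$ exists.
   Context: Fix a first-order signature $\sigma$ and let $\mathrm{Sent}(\sigma)$ be the set of first-order sentences over $\sigma$ (with equality). A theory is a set $\Delta\subseteq \mathrm{Sent}(\sigma)$ such that $\Delta\vdash\theta$ implies $\theta\in\Delta$. A set of sentences is consistent if no contradiction is derivable from it (equivalently, its set of logical consequences is not all of $\mathrm{Sent}(\sigma)$), and complete if for every $\theta\in\mathrm{Sent}(\sigma)$ at least one of $\theta$, $\neg\theta$ belongs to it. A directed set is a partially ordered set $I$ such that any two elements have a common upper bound. For a family $\{\Delta_i\}_{i\in I}$ of sets of sentences indexed by a directed set $I$: $\limsup_I \Delta_i=\{\theta\in\mathrm{Sent}(\sigma): \forall i\in I\ \exists j\ge i\ [\theta\in\Delta_j]\}$, $\liminf_I \Delta_i=\{\theta\in\mathrm{Sent}(\sigma): \exists i\in I\ \forall j\ge i\ [\theta\in\Delta_j]\}$. We say $\lim_I\Delta_i$ exists and equals $\Delta$ if $\limsup_I\Delta_i=\liminf_I\Delta_i=\Delta$. *)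

From Stdlib Require Import List Vectors.Fin.
Import ListNotations.

Record signature : Type := {
  fsym : Type;
  fsym_ar : fsym -> nat;
  rsym : Type;
  rsym_ar : rsym -> nat
}.

Section Syntax.
Variable Sg : signature.

Inductive term : Type :=
| var : nat -> term
| func : forall f : fsym Sg, (Fin.t (fsym_ar Sg f) -> term) -> term.

Inductive form : Type :=
| Fal : form
| Rel : forall r : rsym Sg, (Fin.t (rsym_ar Sg r) -> term) -> form
| Equ : term -> term -> form
| Imp : form -> form -> form
| And : form -> form -> form
| Or  : form -> form -> form
| All : form -> form
| Ex  : form -> form.

Definition Neg (phi : form) : form := Imp phi Fal.

Fixpoint subst_term (s : nat -> term) (t : term) : term :=
  match t with
  | var n => s n
  | func f v => func f (fun i => subst_term s (v i))
  end.

Definition shift_term : term -> term := subst_term (fun n => var (S n)).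

Definition up (s : nat -> term) : nat -> term :=
  fun n => match n with 0 => var 0 | S m => shift_term (s m) end.

Fixpoint subst_form (s : nat -> term) (phi : form) : form :=
  match phi with
  | Fal => Fal
  | Rel r v => Rel r (fun i => subst_term s (v i))
  | Equ t1 t2 => Equ (subst_term s t1) (subst_term s t2)
  | Imp a b => Imp (subst_form s a) (subst_form s b)
  | And a b => And (subst_form s a) (subst_form s b)
  | Or a b => Or (subst_form s a) (subst_form s b)
  | All a => All (subst_form (up s) a)
  | Ex a => Ex (subst_form (up s) a)
  end.

Definition shift_form : form -> form := subst_form (fun n => var (S n)).

Definition inst (t : term) : nat -> term :=
  fun n => match n with 0 => t | S m => var m end.

Fixpoint bounded_term (k : nat) (t : term) : Prop :=
  match t with
  | var n => n < k
  | func f v => forall i, bounded_term k (v i)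
  end.

Fixpoint bounded_form (k : nat) (phi : form) : Prop :=
  match phi with
  | Fal => True
  | Rel r v => forall i, bounded_term k (v i)
  | Equ t1 t2 => bounded_term k t1 /\ bounded_term k t2
  | Imp a b | And a b | Or a b => bounded_form k a /\ bounded_form k b
  | All a | Ex a => bounded_form (S k) a
  end.

Definition sentence (phi : form) : Prop := bounded_form 0 phi.

Inductive prv : list form -> form -> Prop :=
| Ctx A phi : In phi A -> prv A phi
| ImpI A phi psi : prv (phi :: A) psi -> prv A (Imp phi psi)
| ImpE A phi psi : prv A (Imp phi psi) -> prv A phi -> prv A psi
| AllI A phi : prv (map shift_form A) phi -> prv A (All phi)
| AllE A phi t : prv A (All phi) -> prv A (subst_form (inst t) phi)
| ExI A phi t : prv A (subst_form (inst t) phi) -> prv A (Ex phi)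
| ExE A phi psi : prv A (Ex phi) ->
    prv (phi :: map shift_form A) (shift_form psi) -> prv A psi
| FalE A phi : prv A Fal -> prv A phi
| AndI A phi psi : prv A phi -> prv A psi -> prv A (And phi psi)
| AndE1 A phi psi : prv A (And phi psi) -> prv A phi
| AndE2 A phi psi : prv A (And phi psi) -> prv A psi
| OrI1 A phi psi : prv A phi -> prv A (Or phi psi)
| OrI2 A phi psi : prv A psi -> prv A (Or phi psi)
| OrE A phi psi chi : prv A (Or phi psi) -> prv (phi :: A) chi ->
    prv (psi :: A) chi -> prv A chi
| Peirce A phi psi : prv A (Imp (Imp (Imp phi psi) phi) phi)
| EqRefl A t : prv A (Equ t t)
| EqSubst A phi s t : prv A (Equ s t) -> prv A (subst_form (inst s) phi) ->
    prv A (subst_form (inst t) phi).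

Definition derives (Delta : form -> Prop) (theta : form) : Prop :=
  exists L : list form, (forall phi, In phi L -> Delta phi) /\ prv L theta.

Definition sentences (Delta : form -> Prop) : Prop :=
  forall phi, Delta phi -> sentence phi.

Definition is_theory (Delta : form -> Prop) : Prop :=
  sentences Delta /\
  (forall theta, sentence theta -> derives Delta theta -> Delta theta).

Definition consistent (Delta : form -> Prop) : Prop := ~ derives Delta Fal.

Definition complete (Delta : form -> Prop) : Prop :=
  forall theta, sentence theta -> Delta theta \/ Delta (Neg theta).

End Syntax.

Arguments var {Sg}.
Arguments Fal {Sg}.

Definition directed_set (I : Type) (le : I -> I -> Prop) : Prop :=
  (forall i, le i i) /\
  (forall i j k, le i j -> le j k -> le i k) /\
  (forall i j, le i j -> le j i -> i = j) /\
  (forall i j, exists k, le i k /\ le j k).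

Definition limsup {S : signature} {I : Type} (le : I -> I -> Prop)
  (D : I -> form S -> Prop) : form S -> Prop :=
  fun theta => sentence S theta /\ forall i, exists j, le i j /\ D j theta.

Definition liminf {S : signature} {I : Type} (le : I -> I -> Prop)
  (D : I -> form S -> Prop) : form S -> Prop :=
  fun theta => sentence S theta /\ exists i, forall j, le i j -> D j theta.

Definition lim_exists {S : signature} {I : Type} (le : I -> I -> Prop)
  (D : I -> form S -> Prop) : Prop :=
  forall theta, limsup le D theta <-> liminf le D theta.

From Stdlib Require Import List Classical.
Import ListNotations.

(* Every finite subset of liminf lies eventually in a single Delta_j, so a
   derivation of falsehood from liminf would make that Delta_j inconsistent.
   By completeness of the Delta_j, a sentence that is not eventually in them
   has its negation frequently in them: this makes limsup complete, and a
   sentence undecided by liminf puts both it and its negation in limsup.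
   Conversely, consistency of the Delta_j makes liminf (Neg theta) and
   limsup theta disjoint, so completeness of liminf forces limsup = liminf. *)

Lemma sentence_Neg (S : signature) (theta : form S) :
  sentence S theta -> sentence S (Neg S theta).
Proof. unfold sentence, Neg; simpl; tauto. Qed.

Lemma derives_Fal_of_Neg (S : signature) (Delta : form S -> Prop) (theta : form S) :
  Delta theta -> Delta (Neg S theta) -> derives S Delta Fal.
Proof.
  intros Hth Hneg. exists [theta; Neg S theta]. split.
  - intros phi [<- | [<- | []]]; assumption.
  - apply (ImpE _ _ theta); apply Ctx; simpl; auto.
Qed.

Lemma consistent_not_Neg (S : signature) (Delta : form S -> Prop) (theta : form S) :
  consistent S Delta -> Delta theta -> ~ Delta (Neg S theta).
Proof. intros Hc Hth Hneg. exact (Hc (derives_Fal_of_Neg S Delta theta Hth Hneg)). Qed.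

Section Limits.

Variable S : signature.
Variable I : Type.
Variable le : I -> I -> Prop.
Variable D : I -> form S -> Prop.
Hypothesis le_upper_bound : forall i j, exists k, le i k /\ le j k.

Lemma liminf_sub_limsup (theta : form S) : liminf le D theta -> limsup le D theta.
Proof.
  intros [Hs [i0 H0]]. split; [exact Hs|]. intros i.
  destruct (le_upper_bound i i0) as [k [Hik Hi0k]]. exists k; auto.
Qed.

Hypothesis le_trans : forall i j k, le i j -> le j k -> le i k.

Lemma liminf_eventually_all (L : list (form S)) :
  inhabited I -> (forall phi, In phi L -> liminf le D phi) ->
  exists i, forall j, le i j -> forall phi, In phi L -> D j phi.
Proof.
  intros [i0]. induction L as [|a L IH]; intros HL.
  - exists i0. intros j _ phi [].
  - destruct IH as [i Hi]; [intros phi Hphi; apply HL; simpl; auto|].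
    destruct (HL a (or_introl eq_refl)) as [_ [ia Ha]].
    destruct (le_upper_bound i ia) as [k [Hik Hiak]]. exists k.
    intros j Hkj phi [<- | Hphi]; eauto.
Qed.

Lemma liminf_consistent :
  inhabited I -> (forall i, consistent S (D i)) -> consistent S (liminf le D).
Proof.
  intros Hne Hcons [L [HL Hprv]].
  destruct (liminf_eventually_all L Hne HL) as [i Hi].
  destruct (le_upper_bound i i) as [k [Hik _]].
  apply (Hcons k). exists L. split; [exact (Hi k Hik)|exact Hprv].
Qed.

Lemma limsup_of_not_liminf (phi psi : form S) :
  sentence S phi -> sentence S psi -> (forall j, D j phi \/ D j psi) ->
  ~ liminf le D phi -> limsup le D psi.
Proof.
  intros Hphi Hpsi Hor Hnot. split; [exact Hpsi|]. intros i.
  apply NNPP. intros Hnone. apply Hnot. split; [exact Hphi|].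
  exists i. intros j Hij. destruct (Hor j) as [H | H]; [exact H|].
  exfalso. apply Hnone. exists j; auto.
Qed.

Section CompleteStages.

Hypothesis D_complete : forall i, complete S (D i).

Lemma D_theta_or_Neg (theta : form S) :
  sentence S theta -> forall j, D j theta \/ D j (Neg S theta).
Proof. intros Hs j. exact (D_complete j theta Hs). Qed.

Lemma D_Neg_or_theta (theta : form S) :
  sentence S theta -> forall j, D j (Neg S theta) \/ D j theta.
Proof. intros Hs j. destruct (D_complete j theta Hs); auto. Qed.

Lemma limsup_complete : complete S (limsup le D).
Proof.
  intros theta Hs. destruct (classic (liminf le D theta)) as [H | H].
  - left. exact (liminf_sub_limsup theta H).
  - right. exact (limsup_of_not_liminf theta (Neg S theta) Hs (sentence_Neg S theta Hs)
                    (D_theta_or_Neg theta Hs) H).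
Qed.

Lemma liminf_complete_of_limsup_consistent :
  consistent S (limsup le D) -> complete S (liminf le D).
Proof.
  intros Hc theta Hs.
  destruct (classic (liminf le D theta)) as [H1 | H1]; [left; exact H1|].
  destruct (classic (liminf le D (Neg S theta))) as [H2 | H2]; [right; exact H2|].
  exfalso. apply Hc. apply (derives_Fal_of_Neg S _ theta).
  - exact (limsup_of_not_liminf (Neg S theta) theta (sentence_Neg S theta Hs) Hs
             (D_Neg_or_theta theta Hs) H2).
  - exact (limsup_of_not_liminf theta (Neg S theta) Hs (sentence_Neg S theta Hs)
             (D_theta_or_Neg theta Hs) H1).
Qed.

Hypothesis D_consistent : forall i, consistent S (D i).

Lemma liminf_Neg_not_limsup (theta : form S) :
  liminf le D (Neg S theta) -> ~ limsup le D theta.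
Proof.
  intros [_ [i Hi]] [_ Hfreq]. destruct (Hfreq i) as [j [Hij Hj]].
  exact (consistent_not_Neg S (D j) theta (D_consistent j) Hj (Hi j Hij)).
Qed.

Lemma limsup_sub_liminf_of_liminf_complete (theta : form S) :
  complete S (liminf le D) -> limsup le D theta -> liminf le D theta.
Proof.
  intros Hc Hsup. destruct (Hc theta (proj1 Hsup)) as [H | H]; [exact H|].
  exfalso. exact (liminf_Neg_not_limsup theta H Hsup).
Qed.

Lemma limsup_consistent_of_liminf_complete :
  inhabited I -> complete S (liminf le D) -> consistent S (limsup le D).
Proof.
  intros Hne Hc [L [HL Hprv]]. apply (liminf_consistent Hne D_consistent).
  exists L. split; [|exact Hprv].
  intros phi Hphi. exact (limsup_sub_liminf_of_liminf_complete phi Hc (HL phi Hphi)).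
Qed.

Lemma lim_exists_of_liminf_complete :
  complete S (liminf le D) -> lim_exists le D.
Proof.
  intros Hc theta. split.
  - exact (limsup_sub_liminf_of_liminf_complete theta Hc).
  - exact (liminf_sub_limsup theta).
Qed.

Lemma liminf_complete_of_lim_exists :
  lim_exists le D -> complete S (liminf le D).
Proof.
  intros Hlim theta Hs.
  destruct (limsup_complete theta Hs) as [H | H]; [left | right]; apply Hlim; exact H.
Qed.

End CompleteStages.

End Limits.

Theorem lemma2p2 (S : signature) (I : Type) (le : I -> I -> Prop)
  (D : I -> form S -> Prop)
  (HI : directed_set I le) (Hne : inhabited I)
  (Hth : forall i, is_theory S (D i))
  (Hcons : forall i, consistent S (D i))
  (Hcomp : forall i, complete S (D i)) :
  consistent S (liminf le D) /\ complete S (limsup le D) /\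
  (consistent S (limsup le D) <-> complete S (liminf le D)) /\
  (complete S (liminf le D) <-> lim_exists le D).
Proof.
  destruct HI as [_ [Htrans [_ Hub]]].
  split; [exact (liminf_consistent S I le D Hub Htrans Hne Hcons)|].
  split; [exact (limsup_complete S I le D Hub Hcomp)|].
  split; split.
  - exact (liminf_complete_of_limsup_consistent S I le D Hcomp).
  - exact (limsup_consistent_of_liminf_complete S I le D Hub Htrans Hcons Hne).
  - exact (lim_exists_of_liminf_complete S I le D Hub Hcons).
  - exact (liminf_complete_of_lim_exists S I le D Hub Hcomp).
Qed.
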